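(* Let $\nu$ be a non-degenerate probability measure on $\mathbb{R}$ with support bounded from above and suppose $A(\nu)=\sup\operatorname{supp}(\nu)<0$. For $\theta\in\Theta=\left(-\infty,\frac{1}{A(\nu)}\right)\cup(0,\infty)$ let $M(\theta)=\int\frac{1}{1-\theta x}\nu(dx)$, $P_\theta(dx)=\frac{1}{M(\theta)(1-\theta x)}\nu(dx)$ and $$k(\theta)=\int x\,P_\theta(dx)=\frac{M(\theta)-1}{\theta M(\theta)}.$$ Then $k$ is strictly increasing on $(0,\infty)$ and on $\left(-\infty,\frac{1}{A(\nu)}\right)$. *)

From HB Require Import structures.
From mathcomp Require Import all_boot all_order all_algebra.
From mathcomp Require Import all_classical all_reals all_analysis.
Set Implicit Arguments. Unset Strict Implicit. Unset Printing Implicit Defensive.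
Import Order.TTheory GRing.Theory Num.Theory.
Local Open Scope classical_set_scope.
Local Open Scope ring_scope.

Definition msupport (R : realType) (nu : {measure set R -> \bar R}) : set R :=
  [set x | forall e : R, 0 < e -> (0%E < nu `]x - e, x + e[%classic)%O].

Definition non_dirac (R : realType) (nu : {measure set R -> \bar R}) : Prop :=
  ~ (exists a : R, nu [set a] = 1%E).

Definition Mfun (R : realType) (nu : {measure set R -> \bar R}) (theta : R) : R :=
  \int[nu]_(x in [set: R]) (1 - theta * x)^-1.

(* k(theta) = \int x P_theta(dx), where P_theta(dx) = nu(dx) / (M(theta)(1 - theta x)),
   i.e. k(theta) = (1/M(theta)) \int x/(1 - theta x) nu(dx). *)
Definition kfun (R : realType) (nu : {measure set R -> \bar R}) (theta : R) : R :=
  (Mfun nu theta)^-1 * \int[nu]_(x in [set: R]) (x / (1 - theta * x)).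

From HB Require Import structures.
From mathcomp Require Import all_boot all_order all_algebra.
From mathcomp Require Import all_classical all_reals all_analysis.
From mathcomp Require Import ring lra.
From mathcomp Require Import measurable_realfun.
Import Order.TTheory GRing.Theory Num.Theory.
Local Open Scope classical_set_scope.
Local Open Scope ring_scope.

(* Write A for the supremum of the support; nu is concentrated on ]-oo, A].
   For theta in either component of Theta the denominator 1 - theta x keeps a
   fixed sign on ]-oo, A] and is bounded away from 0 there, so every integrand
   below is bounded and M(theta) has that sign.  Fix s < t in one component,
   put a = M(s) and c = \int x/(1 - s x), so that \int (a x - c)/(1 - s x) = 0.
   Splitting (a x - c)^2/((1 - s x)(1 - t x)) into partial fractions gives
     (a - t c) (a N(t) - c M(t)) = (t - s) \int (a x - c)^2/((1 - s x)(1 - t x)),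
   with N(t) = \int x/(1 - t x).  The right-hand side is positive because nu is
   not a Dirac mass, and a - t c = \int (1 - t x)/(1 - s x) > 0, hence
   k(t) - k(s) = (a N(t) - c M(t)) / (M(s) M(t)) > 0. *)

Lemma measurable_inv (R : realType) : measurable_fun [set: R] (@GRing.inv R).
Proof.
have -> : [set: R] = [set x | x != 0] `|` [set 0].
  apply/seteqP; split => x // _.
  by case: (eqVneq x 0) => [->|x_neq0]; [right|left].
apply/measurable_funU => //.
- exact: open_measurable (@open_neq R 0).
split; last exact: measurable_fun_set1.
apply: open_continuous_measurable_fun; first exact: open_neq.
by move=> x; rewrite inE /= => x0; exact: inv_continuous.
Qed.

Lemma probability_cover_null_eq1 d (T : measurableType d) (R : realType)
    (P : probability T R) (B N : set T) :
  measurable B -> measurable N -> P N = 0%E -> [set: T] `<=` B `|` N -> P B = 1%E.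
Proof.
move=> mB mN N0 cover; apply/eqP; rewrite eq_le probability_le1 //=.
rewrite -(probability_setT P) -[leRHS]adde0 -N0.
apply: le_trans (measureU2 _ mB mN); apply: le_measure; rewrite ?inE //.
exact: measurableU.
Qed.

Lemma msupportN_nbhs_null (R : realType) (nu : {measure set R -> \bar R}) y :
  ~ msupport nu y -> exists2 e : R, 0 < e & nu `]y - e, y + e[%classic = 0%E.
Proof.
move=> /existsNP [e /not_implyP [e0 pos]]; exists e => //.
by apply/eqP; rewrite -measure_le0 leNgt; exact/negP.
Qed.

Section null_right_of_support.
Context (R : realType) (nu : probability R R) (A : R).
Hypothesis nbhs_null : forall y, A < y ->
  exists2 e : R, 0 < e & nu `]y - e, y + e[%classic = 0%E.

(* If [nu `[a, b] > 0], the [z] with [nu `[a, z] = 0] are bounded by [b]; their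
   supremum exceeds [A], so it has a null neighbourhood, which pushes the
   supremum further right. *)
Lemma measure_itv_cc_null a b : A < a -> nu `[a, b]%classic = 0%E.
Proof.
move=> Aa; have [ba|ab] := ltP b a.
  by rewrite set_itv_ge ?measure0 // bnd_simp -ltNge.
apply: contrapT => nu_ab.
pose W := [set z | a <= z /\ nu `[a, z]%classic = 0%E].
have W_ub : ubound W b.
  move=> z [az z0]; rewrite leNgt; apply/negP => bz; apply: nu_ab.
  apply: (subset_measure0 _ _ _ z0) => // x /=; rewrite !in_itv /=.
  by move=> /andP[-> xb]; exact: le_trans xb (ltW bz).
have Wa : W a.
  split => //; have [e e0 nu_e] := nbhs_null _ Aa.
  apply: (subset_measure0 _ _ _ nu_e) => // x /=; rewrite !in_itv /=.
  move=> /andP[ax xa]; have -> : x = a by apply/eqP; rewrite eq_le ax xa.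
  apply/andP; split; lra.
have supW : has_sup W by split; [exists a | exists b].
have a_le_sup : a <= sup W := sup_upper_bound supW Wa.
have [e e0 nu_e] := nbhs_null _ (lt_le_trans Aa a_le_sup).
have [z [az nu_z] ez] := sup_adherent e0 supW.
suff /(sup_upper_bound supW) : W (sup W + e / 2) by lra.
split; first lra.
apply/eqP; rewrite -measure_le0 -[0%E]adde0 -{1}nu_z -nu_e.
apply: le_trans (measureU2 _ _ _) => //; apply: le_measure; rewrite ?inE //.
  exact: measurableU.
move=> x /=; rewrite !in_itv /= => /andP[ax xe].
by have [xz|zx] := leP x z; [left; rewrite /= ax | right; apply/andP; split; lra].
Qed.

Lemma measure_itv_oy_null : nu `]A, +oo[%classic = 0%E.
Proof.
apply/negligibleP => //; rewrite itvoyEbigcup.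
apply: negligible_bigcup => k; rewrite (itv_bndy_bigcup_BRight true).
apply: negligible_bigcup => n; apply/negligibleP => //.
by apply: measure_itv_cc_null; rewrite ltrDl invr_gt0.
Qed.

End null_right_of_support.

Lemma measure_itv_oy_sup_msupport (R : realType) (nu : probability R R) :
  has_ubound (msupport nu) -> nu `]sup (msupport nu), +oo[%classic = 0%E.
Proof.
move=> hub; apply: measure_itv_oy_null => y sup_y.
by apply: msupportN_nbhs_null => /(ub_le_sup hub); rewrite leNgt sup_y.
Qed.

(* On ]-oo, A], (-1)^b (1 - th x) is bounded below by a positive constant and
   dominates |x|; for A < 0 it holds throughout the component of Theta
   selected by b. *)
Definition signed_denom {R : realFieldType} (A : R) (b : bool) (th : R) :=
  exists2 d : R, 0 < d & exists K : R, forall x, x <= A ->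
    d <= (-1) ^+ b * (1 - th * x) /\ `|x| <= K * ((-1) ^+ b * (1 - th * x)).

Lemma signed_denom_pos (R : realFieldType) (A th : R) :
  A < 0 -> 0 < th -> signed_denom A false th.
Proof.
move=> A0 th0; exists 1 => //; exists th^-1 => x xA; rewrite expr0 mul1r.
split; first nra.
have -> : th^-1 * (1 - th * x) = th^-1 - x by field; rewrite gt_eqF.
by rewrite ler0_norm ?lerDr ?invr_ge0 ?ltW //; lra.
Qed.

Lemma signed_denom_neg (R : realFieldType) (A th : R) :
  A < 0 -> th < A^-1 -> signed_denom A true th.
Proof.
move=> A0 thA; have thA1 : 1 < th * A by rewrite -ltr_ndivlMr // div1r.
exists (th * A - 1); first lra.
exists (- A / (th * A - 1)) => x xA; rewrite expr1 mulN1r opprB.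
split; first nra.
rewrite ler0_norm; last lra.
rewrite mulrAC ler_pdivlMr; [nra | lra].
Qed.

Lemma measurable_denom_inv (R : realType) (th : R) :
  measurable_fun [set: R] (fun x => (1 - th * x)^-1).
Proof.
apply: (measurableT_comp (measurable_inv R)).
by apply: measurable_funB => //; exact: measurable_funM.
Qed.

Lemma measurable_affine_denom (R : realType) (th al be : R) :
  measurable_fun [set: R] (fun x => (al * x + be) / (1 - th * x)).
Proof.
apply: measurable_funM; last exact: measurable_denom_inv.
by apply: measurable_funD => //; exact: measurable_funM.
Qed.

Lemma cross_denom_partial_fraction (F : fieldType) (a c s t x : F) :
  s != t -> 1 - s * x != 0 -> 1 - t * x != 0 ->
  (a * x - c) ^+ 2 / ((1 - s * x) * (1 - t * x)) =
  ((a - t * c) * a / (t - s) * x - (a - t * c) * c / (t - s)) / (1 - t * x)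
  - ((a - s * c) * a / (t - s) * x - (a - s * c) * c / (t - s)) / (1 - s * x).
Proof. by move=> st us ut; field; rewrite us ut subr_eq0 eq_sym st. Qed.

Section concentrated_below.
Context (R : realType) (nu : probability R R) (A : R).
Hypothesis tail_null : nu `]A, +oo[%classic = 0%E.

Let D := `]-oo, A]%classic : set R.

Let mD : measurable D. Proof. exact: measurable_itv. Qed.

Let in_D x : D x = (x <= A). Proof. by rewrite /D /= in_itv. Qed.

Lemma Rintegral_setT_below (f : R -> R) : measurable_fun [set: R] f ->
  \int[nu]_(x in [set: R]) f x = \int[nu]_(x in D) f x.
Proof.
move=> mf; have DU : [set: R] = D `|` `]A, +oo[%classic.
  apply/seteqP; split => x // _; rewrite /= in_D in_itv /= andbT.
  by case: leP; [left|right].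
congr fine; rewrite DU integral_setU //; last 2 first.
- by rewrite -DU; exact/measurable_EFinP.
- apply/disj_setPS => x []; rewrite /= in_D in_itv /= andbT => xA Ax.
  by move: (lt_le_trans Ax xA); rewrite ltxx.
rewrite (@null_set_integral _ _ _ nu `]A, +oo[%classic) ?adde0 //.
by apply: measurable_funTS; exact/measurable_EFinP.
Qed.

Hypothesis nu_non_dirac : non_dirac nu.

(* A vanishing integral would make [f] vanish almost everywhere on [D], so
   that [nu] would be the Dirac mass at [c]. *)
Lemma Rintegral_below_gt0 (f : R -> R) (c : R) :
  nu.-integrable D (EFin \o f) -> (forall x, x <= A -> 0 <= f x) ->
  (forall x, x <= A -> x != c -> 0 < f x) -> 0 < \int[nu]_(x in D) f x.
Proof.
move=> intf f_ge0 f_gt0.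
rewrite lt_def Rintegral_ge0 ?andbT; last by move=> x; rewrite in_D; apply: f_ge0.
apply/negP => /eqP I0; apply: nu_non_dirac; exists c.
have : (\int[nu]_(x in D) `|(EFin \o f) x| = 0)%E.
  transitivity (\int[nu]_(x in D) (f x)%:E)%E.
    apply: eq_integral => x; rewrite inE in_D => xA.
    by rewrite /= ger0_norm // f_ge0.
  rewrite -(fineK (integrable_fin_num mD intf)).
  by move: I0; rewrite /Rintegral => ->.
case/(ae_eq_integral_abs nu mD (measurable_int nu intf)) => N [mN N0 fN].
apply: (@probability_cover_null_eq1 _ _ _ _ _ (N `|` `]A, +oo[%classic)) => //.
- exact: measurableU.
- by rewrite measureU0.
move=> x _; have [->|xc] := eqVneq x c; [by left | right].
have [xA|Ax] := leP x A; last by right; rewrite /= in_itv /= Ax.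
have Dx : D x by rewrite in_D.
left; apply: fN => /= fx0; move: (f_gt0 x xA xc).
by have [->] := fx0 Dx; rewrite ltxx.
Qed.

Variable b : bool.
Let sg : R := (-1) ^+ b.

Let Nfun th := \int[nu]_(x in [set: R]) (x / (1 - th * x)).

Section fixed_parameter.
Variable th : R.
Hypothesis th_signed : signed_denom A b th.

Lemma signed_denom_gt0 x : x <= A -> 0 < sg * (1 - th * x).
Proof.
by have [d d0 [K /(_ x)]] := th_signed => /[apply] -[/(lt_le_trans d0)].
Qed.

Lemma denom_neq0 x : x <= A -> 1 - th * x != 0.
Proof.
by move=> /signed_denom_gt0; rewrite lt0r mulf_eq0 signr_eq0 => /andP[].
Qed.

Lemma integrable_affine_denom (al be : R) :
  nu.-integrable D (EFin \o (fun x => (al * x + be) / (1 - th * x))).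
Proof.
have [d d0 [K bounds]] := th_signed.
apply: measurable_bounded_integrable => //.
- by rewrite (le_lt_trans (probability_le1 _ mD)) ?ltry.
- exact: measurable_funTS (measurable_affine_denom _ _ _ _).
exists (`|al| * K + `|be| / d); split; first exact: num_real.
move=> M bM x; rewrite in_D => xA; apply: ltW (le_lt_trans _ bM).
have [du xK] := bounds x xA; have u0 := signed_denom_gt0 x xA.
rewrite normf_div; have -> : `|1 - th * x| = sg * (1 - th * x).
  by rewrite -(ger0_norm (ltW u0)) normrM normr_sign mul1r.
rewrite ler_pdivrMr // mulrDl.
apply: (le_trans (ler_normD _ _)); apply: lerD.
  by rewrite normrM -mulrA ler_wpM2l.
by rewrite -mulrA ler_peMr // mulrC ler_pdivlMr // mul1r.
Qed.

Lemma Rintegral_affine_denom (al be : R) :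
  \int[nu]_(x in D) ((al * x + be) / (1 - th * x)) =
  al * Nfun th + be * Mfun nu th.
Proof.
have int_aff al' be' := integrable_affine_denom al' be'.
rewrite /Nfun /Mfun !Rintegral_setT_below; last 2 first.
- exact: measurable_denom_inv.
- by apply: measurable_funM => //; exact: measurable_denom_inv.
rewrite (@eq_Rintegral _ _ _ nu D
    (fun x => al * (x / (1 - th * x)) + be * (1 - th * x)^-1));
  last by move=> x _; rewrite mulrDl mulrA.
rewrite RintegralD // ?RintegralZl //.
- apply: eq_integrable mD _ _ _ (int_aff 0 1) => x _ /=.
  by rewrite mul0r add0r div1r.
- by apply: eq_integrable mD _ _ _ (int_aff 1 0) => x _ /=; rewrite mul1r addr0.
- by apply: eq_integrable mD _ _ _ (int_aff al 0) => x _ /=; rewrite addr0 mulrA.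
- by apply: eq_integrable mD _ _ _ (int_aff 0 be) => x _ /=; rewrite mul0r add0r.
Qed.

Lemma Mfun_signed_gt0 : 0 < sg * Mfun nu th.
Proof.
have := Rintegral_affine_denom 0 sg; rewrite mul0r add0r => <-.
apply: (Rintegral_below_gt0 _ 0).
- exact: integrable_affine_denom.
- move=> x xA; rewrite mul0r add0r -invr_signM invr_ge0 ltW //.
  exact: signed_denom_gt0.
- move=> x xA _; rewrite mul0r add0r -invr_signM invr_gt0.
  exact: signed_denom_gt0.
Qed.

Lemma Mfun_neq0 : Mfun nu th != 0.
Proof. by apply: contraTneq Mfun_signed_gt0 => ->; rewrite mulr0 ltxx. Qed.

End fixed_parameter.

Section two_parameters.
Variables s t : R.
Hypotheses (s_signed : signed_denom A b s) (t_signed : signed_denom A b t).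
Hypothesis s_neq_t : s != t.
Variables a c : R.

Let cross x := (a * x - c) ^+ 2 / ((1 - s * x) * (1 - t * x)).

Let cross_split : {in D, cross =1 fun x =>
  ((a - t * c) * a / (t - s) * x - (a - t * c) * c / (t - s)) / (1 - t * x)
  - ((a - s * c) * a / (t - s) * x - (a - s * c) * c / (t - s)) / (1 - s * x)}.
Proof.
move=> x; rewrite inE in_D => xA.
by apply: cross_denom_partial_fraction => //; exact: denom_neq0.
Qed.

Lemma integrable_cross : nu.-integrable D (EFin \o cross).
Proof.
apply: (eq_integrable mD _ _ _ (integrableB mD
  (integrable_affine_denom _ t_signed _ _)
  (integrable_affine_denom _ s_signed _ _))).
by move=> x xD; rewrite /= cross_split // EFinB.
Qed.

Lemma Rintegral_cross : \int[nu]_(x in D) cross x =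
  ((a - t * c) * (a * Nfun t - c * Mfun nu t)
   - (a - s * c) * (a * Nfun s - c * Mfun nu s)) / (t - s).
Proof.
rewrite (eq_Rintegral _ cross_split) RintegralB //;
  try exact: integrable_affine_denom.
by rewrite !Rintegral_affine_denom //; field; rewrite subr_eq0 eq_sym.
Qed.

Let crossE x :
  cross x = (a * x - c) ^+ 2 / ((sg * (1 - s * x)) * (sg * (1 - t * x))).
Proof. by rewrite mulrACA -expr2 sqrr_sign mul1r. Qed.

Lemma cross_ge0 x : x <= A -> 0 <= cross x.
Proof.
move=> xA; rewrite crossE divr_ge0 ?sqr_ge0 // ltW //.
by apply: mulr_gt0; apply: signed_denom_gt0.
Qed.

Lemma cross_gt0 x : x <= A -> a * x != c -> 0 < cross x.
Proof.
move=> xA axc; rewrite crossE; apply: divr_gt0.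
  by rewrite lt0r sqr_ge0 andbT sqrf_eq0 subr_eq0.
by apply: mulr_gt0; exact: signed_denom_gt0.
Qed.

End two_parameters.

Let denom_ratio_gt0 s t x : signed_denom A b s -> signed_denom A b t ->
  x <= A -> 0 < (1 - t * x) / (1 - s * x).
Proof.
move=> s_signed t_signed xA.
have -> : (1 - t * x) / (1 - s * x) = (sg * (1 - t * x)) / (sg * (1 - s * x)).
  by rewrite -mulf_div divff ?signr_eq0 // mul1r.
by apply: divr_gt0; apply: signed_denom_gt0.
Qed.

Lemma Mfun_sub_Nfun_gt0 s t : signed_denom A b s -> signed_denom A b t ->
  0 < Mfun nu s - t * Nfun s.
Proof.
move=> s_signed t_signed.
have -> : Mfun nu s - t * Nfun s = - t * Nfun s + 1 * Mfun nu s.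
  by rewrite mul1r mulNr addrC.
rewrite -(Rintegral_affine_denom _ s_signed).
apply: (Rintegral_below_gt0 _ 0); first exact: integrable_affine_denom.
- by move=> x xA; rewrite mulNr addrC ltW // denom_ratio_gt0.
- by move=> x xA _; rewrite mulNr addrC denom_ratio_gt0.
Qed.

Lemma Mfun_Nfun_cross_gt0 s t : signed_denom A b s -> signed_denom A b t ->
  s < t -> 0 < Mfun nu s * Nfun t - Nfun s * Mfun nu t.
Proof.
move=> s_signed t_signed st; have s_neq_t : s != t by rewrite lt_eqF.
set a := Mfun nu s; set c := Nfun s.
have a0 : a != 0 := Mfun_neq0 _ s_signed.
rewrite -(pmulr_rgt0 _ (Mfun_sub_Nfun_gt0 _ _ s_signed t_signed)) -/a -/c.
rewrite -(pmulr_lgt0 _ (_ : 0 < (t - s)^-1)) ?invr_gt0 ?subr_gt0 //.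
have := @Rintegral_cross s t s_signed t_signed s_neq_t a c.
rewrite -/a -/c [c * a]mulrC subrr mulr0 subr0 => <-.
apply: (Rintegral_below_gt0 _ (c / a)); first exact: integrable_cross.
- by move=> x xA; apply: cross_ge0.
- move=> x xA xc; apply: cross_gt0 => //.
  by apply: contra_neq xc => <-; rewrite mulrAC mulfV // mul1r.
Qed.

Lemma kfun_lt s t : signed_denom A b s -> signed_denom A b t -> s < t ->
  kfun nu s < kfun nu t.
Proof.
move=> s_signed t_signed st.
have a0 := Mfun_neq0 _ s_signed; have m0 := Mfun_neq0 _ t_signed.
rewrite -subr_gt0 /kfun -/(Nfun s) -/(Nfun t).
have -> : (Mfun nu t)^-1 * Nfun t - (Mfun nu s)^-1 * Nfun s =
    (Mfun nu s * Nfun t - Nfun s * Mfun nu t) /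
    ((sg * Mfun nu s) * (sg * Mfun nu t)).
  by rewrite mulrACA -expr2 sqrr_sign mul1r; field; rewrite a0 m0.
apply: divr_gt0; first exact: Mfun_Nfun_cross_gt0.
by apply: mulr_gt0; apply: Mfun_signed_gt0.
Qed.

End concentrated_below.

Theorem proposition3p5 (R : realType) (nu : probability R R)
  (hnd : non_dirac nu)
  (hub : has_ubound (msupport nu))
  (hA : sup (msupport nu) < 0) :
  (forall s t : R, 0 < s -> s < t -> kfun nu s < kfun nu t) /\
  (forall s t : R, s < t -> t < (sup (msupport nu))^-1 -> kfun nu s < kfun nu t).
Proof.
have mono := kfun_lt _ _ _ (measure_itv_oy_sup_msupport _ _ hub) hnd.
split => [s t s_gt0 st | s t st tA]; apply: (mono _ s t) => //.
- exact: signed_denom_pos.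
- by apply: signed_denom_pos; rewrite // (lt_trans s_gt0).
- by apply: signed_denom_neg; rewrite // (lt_trans st).
- exact: signed_denom_neg.
Qed.
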